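(* Let $p>2$ be a prime, $d\geq 2$ an integer with $d\mid p-1$, $f=(p-1)/d$, and $\omega$ a fixed generator of $\mathbb{F}_p^*$. Let $\theta=0$ if $f$ is even and $\theta=d/2$ if $f$ is odd. Let $\zeta\in\mathbb{C}$ be a primitive $p$-th root of unity and, for $i\in\mathbb{Z}/d\mathbb{Z}$, let $\eta_i=\sum_{k=0}^{f-1}\zeta^{\omega^{kd+i}}$. For $i,j\in\mathbb{Z}/d\mathbb{Z}$ let $(i,j)=\#\{(u,v):0\leq u,v\leq f-1,\ 1+\omega^{du+i}\equiv\omega^{dv+j}\pmod p\}$. For integers $k\geq 0$ and $0\leq\nu\leq d-1$ put $n(k,\nu)=\sum_{i=0}^{d-1}\eta_i^k\,\eta_{i+\nu}$ (indices mod $d$). Then for every $0\leq\nu\leq d-1$: \[ n(1,\nu)+f=p\,\delta_{\theta\nu},\qquad n(2,\nu)+f^2=p\,(\nu,\theta), \] \[ n(3,\nu)+f^3=p\sum_{i=0}^{d-1}(\nu,i)(i,\theta)+f\,\delta_{\theta0}\,[n(1,\nu)+f], \] \[ n(4,\nu)+f^4=p\sum_{i,j=0}^{d-1}(\nu,i)(i,j)(j,\theta)+f\,\delta_{\theta0}\,[n(2,\nu)+f^2]+f\,(0,\theta)\,[n(1,\nu)+f], \] and for every $k\geq 5$, \[ n(k,\nu)+f^k=p\sum_{i_2,\dots,i_{k-1}=0}^{d-1}(\nu,i_2)(i_2,i_3)\cdots(i_{k-1},\theta)+f\,\delta_{\theta0}\,[n(k-2,\nu)+f^{k-2}]+f\,(0,\theta)\,[n(k-3,\nu)+f^{k-3}]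 \] \[ \qquad+\sum_{j=4}^{k-1}f\Big[\sum_{i_2,\dots,i_{j-2}=0}^{d-1}(0,i_2)(i_2,i_3)\cdots(i_{j-2},\theta)\Big]\,[n(k-j,\nu)+f^{k-j}], \] where $\delta$ denotes the Kronecker delta.
   Context: Indices of $\eta_i$ and of the cyclotomic numbers $(i,j)$ are taken modulo $d$. For $j=4$ the inner sum is $\sum_{i_2=0}^{d-1}(0,i_2)(i_2,\theta)$. *)

From mathcomp Require Import all_boot all_order all_algebra.
From mathcomp Require Import algC.

Import Order.TTheory GRing.Theory Num.Theory.
Local Open Scope ring_scope.

Definition fdeg (p d : nat) : nat := (p.-1 %/ d)%N.

Definition theta (p d : nat) : nat := if odd (fdeg p d) then d./2 else 0%N.

(* Gaussian period eta_i = sum_{k=0}^{f-1} zeta^(omega^(k d + i)), index i taken mod d.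
   The exponent omega^(kd+i) in F_p is represented by its canonical residue in [0,p). *)
Definition eta (p d : nat) (omega : 'F_p) (zeta : algC) (i : nat) : algC :=
  \sum_(k < fdeg p d) zeta ^+ (nat_of_ord (omega ^+ (k * d + i %% d)%N)).

Definition cyc (p d : nat) (omega : 'F_p) (i j : nat) : nat :=
  #|[set uv : 'I_(fdeg p d) * 'I_(fdeg p d) |
      1 + omega ^+ (d * uv.1 + i %% d)%N == omega ^+ (d * uv.2 + j %% d)%N]|.

Definition nkn (p d : nat) (omega : 'F_p) (zeta : algC) (k nu : nat) : algC :=
  \sum_(i < d) eta p d omega zeta i ^+ k * eta p d omega zeta (i + nu)%N.

Fixpoint chain (p d : nat) (omega : 'F_p) (m a b : nat) : nat :=
  match m with
  | 0 => cyc p d omega a b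
  | m'.+1 => (\sum_(i < d) cyc p d omega a i * chain p d omega m' i b)%N
  end.

(* The Gaussian period eta_i is the sum of the additive character
   x |-> zeta^x over the cyclotomic class C_i = omega^i <omega^d> of F_p^*.
   Substituting y = x (1 + z) in eta_i eta_(i+a) gives the classical product
   formula eta_i eta_(i+a) = f [-1 in C_a] + sum_l (a,l) eta_(i+l), where
   [-1 in C_a] = delta_(theta a) because -1 = omega^((p-1)/2).  Multiplying by
   eta_i^k and summing over i shows that A_k(nu) = n(k,nu) + f^k satisfies the
   linear recurrence A_(k+1)(nu) = delta_(theta nu) T_k + sum_l (nu,l) A_k(l),
   with A_0 = 0 and source T_k = f sum_i eta_i^k + f^k, for which T_0 = p and
   T_(k+1) = f A_k(0).  So A_k(nu) is the convolution of T with the chain sums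
   W_j(nu) = sum (nu,i_1) ... (i_(j-1),i_j) delta_(theta i_j), and
   commutativity of convolution moves the feedback term onto A itself:
   A_(m+2)(nu) = p W_(m+1)(nu) + f sum_(j <= m) W_j(0) A_(m-j)(nu). *)

From mathcomp Require Import all_boot all_order all_algebra.
From mathcomp Require Import algC finfield zify ring.
Import Order.TTheory GRing.Theory Num.Theory.
Local Open Scope ring_scope.

Set Implicit Arguments.
Unset Strict Implicit.
Unset Printing Implicit Defensive.

Section Convolution.

Variable R : comNzRingType.

Definition conv (u v : nat -> R) (m : nat) : R := \sum_(i < m.+1) u i * v (m - i)%N.

Lemma convCA (u v w : nat -> R) m : conv u (conv v w) m = conv v (conv u w) m.
Proof.
(* Below degree m, conv is the coefficientwise product of polynomials. *)
pose P (a : nat -> R) : {poly R} := \poly_(i < m.+1) a i.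
have coefP a i : (i <= m)%N -> (P a)`_i = a i by move=> le_im; rewrite coef_poly ltnS le_im.
have coefPM a b k : (k <= m)%N -> (P a * P b)`_k = conv a b k.
  move=> le_km; rewrite coefM; apply: eq_bigr => i _.
  have := ltn_ord i; rewrite ltnS => le_ik.
  by rewrite !coefP // ?(leq_trans (leq_subr _ _) le_km) ?(leq_trans le_ik le_km).
have conv_coef a b e : conv a (conv b e) m = (P a * (P b * P e))`_m.
  rewrite coefM; apply: eq_bigr => i _.
  by rewrite coefP ?coefPM ?leq_subr // -ltnS.
by rewrite !conv_coef mulrCA.
Qed.

Lemma eq_convr (u v v' : nat -> R) m : v =1 v' -> conv u v m = conv u v' m.
Proof. by move=> eq_v; apply: eq_bigr => i _; rewrite eq_v. Qed.

End Convolution.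

Section WalkRecurrence.

Variables (R : comNzRingType) (d : nat) (c : nat -> nat -> R) (delta : nat -> R).

Fixpoint walk (j a : nat) : R :=
  if j is j'.+1 then \sum_(l < d) c a l * walk j' l else delta a.

Lemma walkS j a : walk j.+1 a = \sum_(l < d) c a l * walk j l.
Proof. by []. Qed.

Arguments walk : simpl never.

Variables (A : nat -> nat -> R) (T : nat -> R) (P F : R).
Hypothesis A0 : forall a, A 0 a = 0.
Hypothesis AS : forall k a, A k.+1 a = delta a * T k + \sum_(l < d) c a l * A k l.

Let Tpred k := if k is k'.+1 then T k' else 0.

Lemma rec_closed_form k a : A k a = conv (walk^~ a) Tpred k.
Proof.
elim: k a => [|k IH] a; first by rewrite /conv big_ord1 A0 mulr0.
rewrite AS /conv big_ord_recl /=; congr (_ + _).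
under [RHS]eq_bigr do rewrite /bump /= add1n subSS walkS.
under eq_bigr do rewrite IH /conv big_distrr /=.
rewrite exchange_big /=; apply: eq_bigr => j _.
by rewrite big_distrl /=; apply: eq_bigr => l _; rewrite mulrA.
Qed.

Hypotheses (T0 : T 0 = P) (TS : forall k, T k.+1 = F * A k 0).

Lemma rec_feedback_form m a :
  A m.+2 a = P * walk m.+1 a + F * conv (walk^~ 0) (A^~ a) m.
Proof.
have swap : conv (walk^~ 0) (A^~ a) m = conv (walk^~ a) (A^~ 0) m.
  have closed x : A^~ x =1 conv (walk^~ x) Tpred by move=> k; apply: rec_closed_form.
  by rewrite (eq_convr _ _ (closed a)) (eq_convr _ _ (closed 0)) convCA.
have [Tpred0 TpredS] : Tpred 0 = 0 /\ forall k, Tpred k.+1 = T k by [].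
rewrite swap rec_closed_form {1}/conv big_ord_recr big_ord_recr /= subnn subSnn.
rewrite Tpred0 TpredS T0 mulr0 addr0 addrC [_ * P]mulrC; congr (_ + _).
rewrite /conv big_distrr; apply: eq_bigr => j _.
have le_jm : (j <= m)%N by rewrite -ltnS.
by rewrite !subSn ?(leq_trans le_jm) // TpredS TS mulrCA.
Qed.

End WalkRecurrence.

Lemma sum_eq_mem (T : finType) (A : {pred T}) y : (\sum_(x in A) (x == y))%N = (y \in A).
Proof.
rewrite big_mkcond (eq_bigr (fun x => if x == y then (x \in A : nat) else 0%N)).
  by rewrite -big_mkcond big_pred1_eq.
by move=> x _; case: eqP => [-> | _]; case: (_ \in A).
Qed.

Section AdditiveCharacter.

Variables (R : idomainType) (p : nat) (zeta : R).
Hypotheses (p_pr : prime p) (zeta_prim : p.-primitive_root zeta).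

Definition chi (x : 'F_p) : R := zeta ^+ x.

Lemma chiD x y : chi (x + y) = chi x * chi y.
Proof.
rewrite /chi -exprD -(prim_expr_mod zeta_prim (x + y)).
by congr (_ ^+ (_ %% _)); rewrite Fp_cast.
Qed.

Lemma sum_chi : \sum_(x : 'F_p) chi x = 0.
Proof.
have zeta_neq1 : zeta != 1.
  rewrite -[zeta]expr1 -(prim_order_dvd zeta_prim) dvdn1.
  by apply: contraTneq (prime_gt1 p_pr) => ->.
have : (zeta - 1) * \sum_(x : 'F_p) chi x = 0.
  rewrite [\sum_x _](_ : _ = \sum_(i < (Zp_trunc (pdiv p)).+2) zeta ^+ i) //.
  by rewrite -subrX1 Fp_cast // prim_expr_order // subrr.
by move/eqP; rewrite mulf_eq0 subr_eq0 (negbTE zeta_neq1) => /eqP.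
Qed.

End AdditiveCharacter.

Section CyclotomicClasses.

Variables (p d : nat) (omega : 'F_p).
Hypotheses (p_pr : prime p) (d_gt0 : (0 < d)%N) (d_dvd : (d %| p.-1)%N).
Hypothesis omega_prim : (p.-1).-primitive_root omega.

Local Notation f := (fdeg p d).

Lemma fdegMd : (f * d)%N = p.-1.
Proof. by rewrite /fdeg divnK. Qed.

Definition cclass (i : nat) : {set 'F_p} := [set omega ^+ (k * d + i %% d) | k : 'I_f].

Lemma mem_cclass_expr m i : (omega ^+ m \in cclass i) = (m %% d == i %% d)%N.
Proof.
apply/imsetP/eqP => [[k _ /eqP]|eq_mi].
  rewrite (eq_prim_root_expr omega_prim) -fdegMd => /eqP/(congr1 (modn^~ d)).
  by rewrite !modn_dvdm ?dvdn_mull // modnMDl modn_mod.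
have lt_md : ((m %% p.-1) %/ d < f)%N.
  by rewrite ltn_divLR // fdegMd ltn_mod; have := prime_gt1 p_pr; lia.
exists (Ordinal lt_md) => //=.
rewrite -eq_mi -(modn_dvdm m d_dvd) -divn_eq.
by rewrite (prim_expr_mod omega_prim).
Qed.

Lemma omega_expr_inj : {in gtn p.-1 &, injective (GRing.exp omega)}.
Proof.
move=> m n lt_m lt_n /eqP.
by rewrite (eq_prim_root_expr omega_prim) !modn_small // => /eqP.
Qed.

Lemma nz_omega_expr x : x != 0 -> exists m, x = omega ^+ m.
Proof.
move=> nz_x; have x_unity : x ^+ p.-1 = 1.
  apply: (mulfI nz_x); rewrite -exprS prednK ?prime_gt0 // mulr1.
  by have := expf_card x; rewrite card_Fp.
by have [i ->] := prim_rootP omega_prim x_unity; exists i.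
Qed.

Lemma cclass_neq0 x i : x \in cclass i -> x != 0.
Proof.
case/imsetP=> k _ ->; rewrite expf_neq0 // (prim_root_eq0 omega_prim).
by have := prime_gt1 p_pr; lia.
Qed.

Lemma cclass_expr_inj i : injective (fun k : 'I_f => omega ^+ (k * d + i %% d)).
Proof.
have lt_expr (k : 'I_f) : (k * d + i %% d < p.-1)%N.
  by rewrite -fdegMd; have := ltn_ord k; have := ltn_pmod i d_gt0; nia.
move=> k1 k2 /omega_expr_inj eq_k; apply/val_inj/eqP.
by have /eqP := eq_k (lt_expr k1) (lt_expr k2); rewrite eqn_add2r eqn_pmul2r.
Qed.

Lemma card_cclass i : #|cclass i| = f.
Proof. by rewrite card_imset ?card_ord //; apply: cclass_expr_inj. Qed.

Lemma big_cclass (R : Type) (idx : R) (op : Monoid.com_law idx) (F : 'F_p -> R) i :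
  \big[op/idx]_(x in cclass i) F x = \big[op/idx]_(k < f) F (omega ^+ (k * d + i %% d)).
Proof. by rewrite big_imset // => k1 k2 _ _; apply: cclass_expr_inj. Qed.

Lemma cclassM x y i j : x \in cclass i -> y \in cclass j -> x * y \in cclass (i + j).
Proof.
case/imsetP=> k _ ->; case/imsetP=> l _ ->.
by rewrite -exprD mem_cclass_expr -modnDm !modnMDl !modn_mod modnDm.
Qed.

Lemma mulr_cclass w i l : w \in cclass l -> [set x * w | x in cclass i] = cclass (i + l).
Proof.
move=> w_l; have inj_mulw : injective ( *%R^~ w) by apply/mulIf/(cclass_neq0 w_l).
apply/eqP; rewrite eqEcard card_cclass card_imset // card_cclass leqnn andbT.
by apply/subsetP => _ /imsetP[x x_i ->]; apply: cclassM.
Qed.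

Lemma big_cclass_mulr (R : Type) (idx : R) (op : Monoid.com_law idx) (F : 'F_p -> R) w i l :
  w \in cclass l ->
  \big[op/idx]_(x in cclass i) F (x * w) = \big[op/idx]_(y in cclass (i + l)) F y.
Proof.
move=> w_l; rewrite -(mulr_cclass i w_l) [RHS]big_imset // => x y _ _.
exact/mulIf/(cclass_neq0 w_l).
Qed.

Lemma mem_cclass_uniq y i j : y \in cclass i -> (y \in cclass j) = (i %% d == j %% d)%N.
Proof. by case/imsetP=> k _ ->; rewrite mem_cclass_expr modnMDl modn_mod. Qed.

Lemma nz_cclass_exists y : y != 0 -> exists2 l, (l < d)%N & y \in cclass l.
Proof.
case/nz_omega_expr => m ->; exists (m %% d)%N; first by rewrite ltn_mod.
by rewrite mem_cclass_expr modn_mod.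
Qed.

Lemma big_cclass_pick (R : Type) (idx : R) (op : Monoid.law idx) (F : nat -> R) y l :
  (l < d)%N -> y \in cclass l -> \big[op/idx]_(j < d | y \in cclass j) F j = F l.
Proof.
move=> lt_ld y_l; rewrite (big_pred1 (Ordinal lt_ld)) // => j.
by rewrite (mem_cclass_uniq _ y_l) !modn_small // eq_sym.
Qed.

Lemma cyc_cclass a b :
  cyc p d omega a b = (\sum_(x in cclass a) ((1 + x)%R \in cclass b))%N.
Proof.
rewrite /cyc -sum1_card big_mkcond big_cclass.
under [RHS]eq_bigr do rewrite -sum_eq_mem big_cclass.
by rewrite pair_bigA; apply: eq_bigr => -[u v] _; rewrite inE /= eq_sym !(mulnC d).
Qed.

Lemma cclass0 i : (0 \in cclass i) = false.
Proof. by apply/negbTE/negP => /cclass_neq0; rewrite eqxx. Qed.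

Lemma count_cclass y : (\sum_(l < d) (y \in cclass l))%N = (y != 0).
Proof.
have [-> | nz_y] := eqVneq y 0; first by rewrite big1 // => l _; rewrite cclass0.
have [l lt_ld y_l] := nz_cclass_exists nz_y.
transitivity (\sum_(j < d | y \in cclass j) 1)%N.
  by rewrite [RHS]big_mkcond; apply: eq_bigr => j _; case: (_ \in _).
by rewrite (big_cclass_pick _ (fun=> 1%N) lt_ld y_l).
Qed.

Lemma cyc_row_sum a : (\sum_(l < d) cyc p d omega a l + ((-1)%R \in cclass a))%N = f.
Proof.
under eq_bigr do rewrite cyc_cclass.
rewrite exchange_big /= -sum_eq_mem -big_split /= -(card_cclass a) -sum1_card.
by apply: eq_bigr => x _; rewrite count_cclass addrC addr_eq0; case: (x == -1).
Qed.

Lemma theta_lt : (theta p d < d)%N.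
Proof. by rewrite /theta; case: ifP => _; lia. Qed.

Hypothesis p_gt2 : (2 < p)%N.

Lemma predp_even : ~~ odd p.-1.
Proof.
by case: (even_prime p_pr) p_gt2 => [-> // | ]; case: (p) => // q; rewrite /= negbK.
Qed.

Lemma omega_expr_half : omega ^+ (p.-1)./2 = -1.
Proof.
set h := (p.-1)./2; have p1E : p.-1 = (h * 2)%N by rewrite muln2 even_halfK ?predp_even.
have : (omega ^+ h) ^+ 2 == 1 by rewrite -exprM -p1E prim_expr_order.
rewrite sqrf_eq1 => /orP[/eqP omega_h1 | /eqP //].
by have := prim_order_dvd omega_prim h; rewrite omega_h1 eqxx gtnNdvd //; lia.
Qed.

Lemma half_predp_mod : ((p.-1)./2 %% d)%N = theta p d.
Proof.
have := predp_even; rewrite /theta -fdegMd oddM.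
have := odd_double_half f; have := odd_double_half d.
case: (odd f) => [dE fE /= even_d | _ fE _].
  have -> : ((f * d)./2 = f./2 * d + d./2)%N by move: dE; rewrite (negbTE even_d); nia.
  by rewrite modnMDl modn_small //; lia.
by rewrite -fE add0n -doubleMl doubleK modnMl.
Qed.

Lemma mem_cclass_N1 nu : (nu < d)%N -> (-1 \in cclass nu) = (theta p d == nu).
Proof.
by move=> lt_nu; rewrite -omega_expr_half mem_cclass_expr half_predp_mod modn_small.
Qed.

Section GaussianPeriods.

Variable zeta : algC.
Hypothesis zeta_prim : p.-primitive_root zeta.

Local Notation c := (cyc p d omega).
Local Notation η := (eta p d omega zeta).
Local Notation n := (nkn p d omega zeta).

Definition cdelta a : algC := (-1 \in cclass a)%:R.
Local Notation δ := cdelta.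

Lemma eta_cclass i : η i = \sum_(x in cclass i) chi zeta x.
Proof. by rewrite big_cclass. Qed.

Lemma sum_chi_cclass_mul i y :
  \sum_(x in cclass i) chi zeta (x * y) =
    f%:R * (y == 0)%:R + \sum_(l < d | y \in cclass l) η (i + l).
Proof.
have [-> | nz_y] := eqVneq y 0.
  under eq_bigr do rewrite mulr0 /chi expr0.
  by rewrite sumr_const card_cclass big_pred0 => [|l]; rewrite ?cclass0 ?mulr1 ?addr0.
have [l lt_ld y_l] := nz_cclass_exists nz_y.
rewrite (big_cclass_pick _ (fun l => η (i + l)) lt_ld y_l) (big_cclass_mulr _ _ i y_l).
by rewrite eta_cclass mulr0 add0r.
Qed.

Lemma eta_mul i a : η i * η (i + a) = f%:R * δ a + \sum_(l < d) (c a l)%:R * η (i + l).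
Proof.
transitivity (\sum_(z in cclass a) \sum_(x in cclass i) chi zeta (x * (1 + z))).
  rewrite !eta_cclass big_distrl exchange_big /=; apply: eq_bigr => x x_i.
  rewrite big_distrr addnC -(big_cclass_mulr _ _ a x_i) /=.
  by apply: eq_bigr => z _; rewrite -(chiD p_pr zeta_prim) mulrDr mulr1 mulrC.
under eq_bigr do rewrite sum_chi_cclass_mul big_mkcond /=.
rewrite big_split /= -big_distrr /= exchange_big /=; congr (_ * _ + _).
  rewrite /cdelta -(sum_eq_mem (cclass a)) natr_sum; apply: eq_bigr => z _.
  by rewrite addrC addr_eq0.
apply: eq_bigr => l _; rewrite cyc_cclass natr_sum big_distrl /=.
by apply: eq_bigr => z _; case: (_ \in _); rewrite ?mul1r ?mul0r.
Qed.

Lemma sum_eta nu : \sum_(i < d) η (i + nu) = -1.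
Proof.
have shift : \sum_(i < d) η (i + nu) = \sum_(i < d) η i.
  pose s (i : 'I_d) := Ordinal (ltn_pmod (i + nu) d_gt0).
  have s_inj : injective s.
    move=> i j /(congr1 val) /= /eqP; rewrite eqn_modDr !modn_small // => /eqP.
    exact: val_inj.
  by rewrite [RHS](reindex_inj s_inj); apply: eq_bigr => i _; rewrite /eta modn_mod.
rewrite shift; under eq_bigr do rewrite eta_cclass big_mkcond /=.
rewrite exchange_big /= (bigD1 0) //= big1 ?add0r => [|i _]; last by rewrite cclass0.
rewrite (eq_bigr (chi zeta)) => [|x nz_x].
  have := sum_chi p_pr zeta_prim; rewrite (bigD1 0) //= /chi expr0 => /eqP.
  by rewrite addrC addr_eq0 => /eqP.
have [l lt_ld x_l] := nz_cclass_exists nz_x.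
by rewrite -big_mkcond (big_cclass_pick _ (fun=> chi zeta x) lt_ld x_l).
Qed.

Definition psum k : algC := \sum_(i < d) η i ^+ k.

Lemma nkn_rec k nu :
  n k.+1 nu = f%:R * δ nu * psum k + \sum_(l < d) (c nu l)%:R * n k l.
Proof.
rewrite /nkn /psum.
under eq_bigr => i _ do rewrite exprSr -mulrA eta_mul mulrDr big_distrr /=.
rewrite big_split /= -big_distrl /= mulrC; congr (_ + _).
rewrite exchange_big /=; apply: eq_bigr => l _; rewrite big_distrr /=.
by apply: eq_bigr => i _; rewrite mulrCA.
Qed.

Definition nkf k nu : algC := n k nu + (f ^ k)%:R.

Definition tsum k : algC := f%:R * psum k + (f ^ k)%:R.

Lemma nkf0 nu : nkf 0 nu = 0.
Proof.
rewrite /nkf /nkn; under eq_bigr do rewrite expr0 mul1r.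
by rewrite sum_eta addNr.
Qed.

Lemma nkf_rec k nu : nkf k.+1 nu = δ nu * tsum k + \sum_(l < d) (c nu l)%:R * nkf k l.
Proof.
have row_sum : f%:R = \sum_(l < d) (c nu l)%:R + δ nu :> algC.
  by rewrite -natr_sum -natrD cyc_row_sum.
rewrite /nkf nkn_rec expnS natrM [in f%:R * (f ^ k)%:R]row_sum /tsum.
under [in RHS]eq_bigr do rewrite mulrDr.
rewrite big_split /= mulrDl big_distrl /=; ring.
Qed.

Lemma tsum0 : tsum 0 = p%:R.
Proof.
rewrite /tsum /psum; under eq_bigr do rewrite expr0.
by rewrite sumr_const card_ord -natrM -natrD fdegMd addn1 prednK ?prime_gt0.
Qed.

Lemma tsumS k : tsum k.+1 = f%:R * nkf k 0.
Proof.
rewrite /tsum /nkf /nkn /psum expnS natrM mulrDr; congr (_ * _ + _).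
by apply: eq_bigr => i _; rewrite exprSr addn0.
Qed.

Local Notation walkc := (walk d (fun a l => (c a l)%:R) δ).

Lemma nkf_feedback m nu :
  nkf m.+2 nu = p%:R * walkc m.+1 nu + f%:R * conv (walkc^~ 0) (nkf^~ nu) m.
Proof.
exact: (rec_feedback_form (c := fun a l => (c a l)%:R) nkf0 nkf_rec tsum0 tsumS).
Qed.

Lemma cdelta_theta a : (a < d)%N -> δ a = (theta p d == a)%:R.
Proof. by move=> lt_ad; rewrite /cdelta mem_cclass_N1. Qed.

Lemma walkc0 a : (a < d)%N -> walkc 0 a = (theta p d == a)%:R.
Proof. exact: cdelta_theta. Qed.

Lemma nkf1 nu : (nu < d)%N -> nkf 1 nu = p%:R * (theta p d == nu)%:R.
Proof.
move=> lt_nu; rewrite nkf_rec tsum0 cdelta_theta // mulrC big1 ?addr0 // => l _.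
by rewrite nkf0 mulr0.
Qed.

Lemma walkcS_chain j a : walkc j.+1 a = (chain p d omega j a (theta p d))%:R.
Proof.
elim: j a => [|j IH] a; rewrite walkS; last first.
  by rewrite natr_sum; apply: eq_bigr => l _; rewrite IH natrM.
rewrite (bigD1 (Ordinal theta_lt)) //= (cdelta_theta theta_lt) eqxx mulr1.
rewrite big1 ?addr0 // => l ne_l; rewrite (cdelta_theta (ltn_ord l)).
rewrite (_ : theta p d == l = false) ?mulr0 //.
by apply: contraNF ne_l => /eqP th_l; apply/eqP/val_inj.
Qed.

Lemma nkf_chain_rec k nu : (2 <= k)%N ->
  nkf k nu = p%:R * (chain p d omega (k - 2) nu (theta p d))%:R
             + f%:R * \sum_(2 <= j < k) walkc (j - 2) 0 * nkf (k - j) nu.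
Proof.
case: k => [|[|m]] // _; rewrite nkf_feedback walkcS_chain subn2 /=.
rewrite /conv big_ord_recr /= subnn nkf0 mulr0 addr0 (big_addn 0 _ 2) subn2 big_mkord /=.
by congr (_ + _ * _); apply: eq_bigr => i _; rewrite addnK -addn2 subnDr.
Qed.

End GaussianPeriods.

End CyclotomicClasses.

Theorem lemma2 (p d : nat) (omega : 'F_p) (zeta : algC) :
  prime p -> (2 < p)%N -> (2 <= d)%N -> (d %| p.-1)%N ->
  (p.-1).-primitive_root omega -> p.-primitive_root zeta ->
  forall nu : nat, (nu < d)%N ->
  let f := fdeg p d in
  let th := theta p d in
  let n := nkn p d omega zeta in
  let c := cyc p d omega in
  let ch := chain p d omega in
  [/\ n 1%N nu + f%:R = p%:R * (th == nu)%:R,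
      n 2%N nu + (f ^ 2)%:R = p%:R * (c nu th)%:R,
      n 3%N nu + (f ^ 3)%:R =
        p%:R * (\sum_(i < d) c nu i * c i th)%N%:R
        + f%:R * (th == 0%N)%:R * (n 1%N nu + f%:R),
      n 4%N nu + (f ^ 4)%:R =
        p%:R * (\sum_(i < d) \sum_(j < d) c nu i * c i j * c j th)%N%:R
        + f%:R * (th == 0%N)%:R * (n 2%N nu + (f ^ 2)%:R)
        + f%:R * (c 0%N th)%:R * (n 1%N nu + f%:R)
    & forall k : nat, (5 <= k)%N ->
      n k nu + (f ^ k)%:R =
        p%:R * (ch (k - 2)%N nu th)%:R
        + f%:R * (th == 0%N)%:R * (n (k - 2)%N nu + (f ^ (k - 2)%N)%:R)
        + f%:R * (c 0%N th)%:R * (n (k - 3)%N nu + (f ^ (k - 3)%N)%:R)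
        + \sum_(4 <= j < k) f%:R * (ch (j - 3)%N 0%N th)%:R
                               * (n (k - j)%N nu + (f ^ (k - j)%N)%:R)].
Proof.
move=> p_pr p_gt2 d_ge2 d_dvd omega_prim zeta_prim nu lt_nu f th n c ch.
have d_gt0 : (0 < d)%N by apply: ltnW.
have nkfE k : n k nu + (f ^ k)%:R = nkf d omega zeta k nu by [].
have rec k (le2k : (2 <= k)%N) :=
  nkf_chain_rec p_pr d_gt0 d_dvd omega_prim p_gt2 zeta_prim nu le2k.
have w0 := walkc0 p_pr d_gt0 d_dvd omega_prim p_gt2 d_gt0.
have wS := walkcS_chain p_pr d_gt0 d_dvd omega_prim p_gt2.
split.
- by rewrite nkfE (nkf1 p_pr d_gt0 d_dvd omega_prim p_gt2 zeta_prim lt_nu).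
- by rewrite nkfE rec // big_geq // mulr0 addr0.
- by rewrite !nkfE rec // big_nat1 w0 mulrA.
- rewrite !nkfE rec // big_ltn // big_nat1 w0 wS mulrDr !mulrA addrA.
  congr (_ * _%:R + _ + _).
  by apply: eq_bigr => i _; rewrite big_distrr /=; apply: eq_bigr => j _; rewrite mulnA.
move=> k le5k; rewrite !nkfE rec ?(leq_trans _ le5k) //.
rewrite big_ltn ?(leq_trans _ le5k) // big_ltn ?(leq_trans _ le5k) //.
rewrite w0 wS !mulrDr !mulrA !addrA; congr (_ + _).
rewrite big_distrr /=; apply: eq_big_nat => j /andP[le4j _]; rewrite (_ : (j - 2 = (j - 3).+1)%N); last by lia.
by rewrite wS mulrA.
Qed.
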